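(* Assume the Nested Logit model with outside option described in the context satisfies Assumptions 1 and 2, and suppose the true choice probabilities $\phi(i,S)$ are known for all $S \in \mathcal{S} \cup \{[n]\}$ and all $i \in S \cup \{0\}$ (so all boost factors $\mathsf{BF}(i,S)$, $S\in\mathcal S$, $i\in S\cup\{0\}$, are known exactly). Then the matrix $E$ returned by Algorithm 1 (described in the context) satisfies $E[i,j] = \mathbf{1}(N(i) = N(j))$ for all $i \neq j$ in $[n]$.
   Context: Items: $[n]=\{1,\dots,n\}$ with $n\ge 2$. Experiment design: fix an integer base $b \ge 2$, let $L = \lceil \log_b n \rceil$, and fix an injective map $\sigma: [n] \to \{0,\dots,b-1\}^L$, writing $\sigma_\ell(i)$ for its $\ell$-th coordinate. For $\ell \in \{1,\dots,L\}$ and $d \in \{0,\dots,b-1\}$ let $S_{\ell,-d} = \{i \in [n] : \sigma_\ell(i) \neq d\}$, and let $\mathcal{S} = \{S_{\ell,-d}\}_{\ell,d}$; the control assortment $[n]$ is also offered. Nested Logit model with outside option: $\mathcal{N}$ is a partition of $[n]$ into nonempty disjoint nests; $N(i)$ denotes the nest containing $i$. Each item has a weight $v_i > 0$, each nest $N$ a parameter $\lambda_N \in [0,1]$, and each nest with $\lambda_N = 0$ an additional weight $v_N > 0$. For $S \subseteq [n]$ set $v_N(S) = (\sum_{i \in N \cap S} v_i)^{\lambda_N}$ if $\lambda_N \in (0,1]$ and $v_N(S) = v_N \mathbf{1}(N \cap S \neq \emptyset)$ if $\lambda_N = 0$. For $i \in S$, $\phi(i,S) = \frac{v_{N(i)}(S)}{1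 + \sum_{N \in \mathcal{N}} v_N(S)} \cdot \frac{v_i}{\sum_{j \in N(i) \cap S} v_j}$, and $\phi(0,S) = \frac{1}{1 + \sum_{N \in \mathcal{N}} v_N(S)}$. Boost factor: $\mathsf{BF}(i,S) = \phi(i,S)/\phi(i,[n])$ for $S \in \mathcal{S}$, $i \in S \cup \{0\}$. Multiplier: $\mathsf{Mult}(N,S) = \left(\frac{\sum_{j \in N} v_j}{\sum_{j \in N \cap S} v_j}\right)^{1-\lambda_N}$. Assumption 1: $\lambda_N = 1$ iff $|N| = 1$. Assumption 2: for every $S \in \mathcal{S}$ and distinct nests $N \neq N'$ with $\emptyset \neq N \cap S \neq N$ and $\emptyset \neq N' \cap S \neq N'$, $\mathsf{Mult}(N,S) \neq \mathsf{Mult}(N',S)$. Algorithm 1 maintains a symmetric matrix $E$ with entries $E[i,j] \in \{0,1,\text{null}\}$ for $i \neq j$ (every assignment to $E[i,j]$ is also made to $E[j,i]$), initially all null. (1) For each $S \in \mathcal{S}$ (in any order): for each pair of distinct $i,j \in S$, if $\mathsf{BF}(i,S) \neq \mathsf{BF}(j,S)$ set $E[i,j] \gets 0$; else if $\mathsf{BF}(i,S) = \mathsf{BF}(j,S) > \mathsf{BF}(0,S)$ set $E[i,j] \gets 1$. Then, with $\mathrm{NoBoost} = \{i \in S : \mathsf{BF}(i,S) = \mathsf{BF}(0,S)\}$, set $E[i,k] \gets 0$ for all $i \in \mathrm{NoBoost}$ and all $k \notin S$. (2) One-hop transitivity: compute the set of pairs $(i,j)$ with $E[i,j] = \text{null}$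 for which some $k \notin \{i,j\}$ has $E[i,k] = E[j,k] = 1$, and set $E[i,j] \gets 1$ for all such pairs. (3) Identify missing pairs: compute the set of pairs $(i,j)$ with $E[i,j] = \text{null}$ such that $E[i,k] \neq 1$ and $E[j,k] \neq 1$ for all $k \notin \{i,j\}$, and set $E[i,j] \gets 1$ for all such pairs. (4) Set every remaining null entry to $0$ and return $E$. *)

From HB Require Import structures.
From mathcomp Require Import all_boot all_order all_algebra.
From mathcomp Require Import reals exp.
Set Implicit Arguments. Unset Strict Implicit. Unset Printing Implicit Defensive.
Import Order.TTheory GRing.Theory Num.Theory.
Local Open Scope ring_scope.

(* Items are 'I_n (0-based); coordinates l range over 'I_L with L = up_log b n
   = ceil(log_b n); sigma : 'I_n -> {ffun 'I_L -> 'I_b}. *)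
Definition S_minus (n b : nat) (sigma : 'I_n -> {ffun 'I_(up_log b n) -> 'I_b})
  (l : 'I_(up_log b n)) (d : 'I_b) : {set 'I_n} :=
  [set i | sigma i l != d].

Definition Sfam (n b : nat) (sigma : 'I_n -> {ffun 'I_(up_log b n) -> 'I_b})
  : {set {set 'I_n}} :=
  [set S_minus sigma l d | l : 'I_(up_log b n), d : 'I_b].

Section NL.
Variables (R : realType) (n : nat) (P : {set {set 'I_n}}) (v : 'I_n -> R)
  (lam vN : {set 'I_n} -> R).

Definition wsum (A : {set 'I_n}) : R := \sum_(i in A) v i.

Definition nestw (N S : {set 'I_n}) : R :=
  if lam N == 0 then (if N :&: S != set0 then vN N else 0)
  else (wsum (N :&: S)) `^ (lam N).

Definition denom (S : {set 'I_n}) : R := 1 + \sum_(N in P) nestw N S.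

Definition nest (i : 'I_n) : {set 'I_n} := pblock P i.

Definition phi (i : 'I_n) (S : {set 'I_n}) : R :=
  nestw (nest i) S / denom S * (v i / wsum (nest i :&: S)).

Definition phi0 (S : {set 'I_n}) : R := 1 / denom S.

Definition BF (i : 'I_n) (S : {set 'I_n}) : R := phi i S / phi i [set: 'I_n].
Definition BF0 (S : {set 'I_n}) : R := phi0 S / phi0 [set: 'I_n].

Definition Mult (N S : {set 'I_n}) : R :=
  (wsum N / wsum (N :&: S)) `^ (1 - lam N).
End NL.

(* Matrix entries: None = null, Some false = 0, Some true = 1. *)
Section Alg.
Variables (R : realType) (n : nat) (BFi : 'I_n -> {set 'I_n} -> R)
  (BFo : {set 'I_n} -> R).

Definition mat := 'I_n -> 'I_n -> option bool.

Definition E_init : mat := fun _ _ => None.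

(* The pair updates inside S
   touch each unordered pair once and are independent of the order; the
   NoBoost updates touch pairs (i,k), i in S, k not in S, disjoint from them. *)
Definition step1 (E : mat) (S : {set 'I_n}) : mat := fun i j =>
  if [&& i \in S, j \in S & i != j] then
    if BFi i S != BFi j S then Some false
    else if BFo S < BFi i S then Some true
    else E i j
  else if [&& i \in S, BFi i S == BFo S & j \notin S]
       || [&& j \in S, BFi j S == BFo S & i \notin S] then Some false
  else E i j.

(* step (2): one-hop transitivity, computed simultaneously *)
Definition step2 (E : mat) : mat := fun i j =>
  if [&& E i j == None, i != j &
        [exists k, [&& k != i, k != j, E i k == Some true & E j k == Some true]]]
  then Some true else E i j.

(* step (3): missing pairs, computed simultaneously *)
Definition step3 (E : mat) : mat := fun i j =>
  if [&& E i j == None, i != j &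
        [forall k, ((k != i) && (k != j)) ==>
                   ((E i k != Some true) && (E j k != Some true))]]
  then Some true else E i j.

Definition step4 (E : mat) : 'I_n -> 'I_n -> bool := fun i j =>
  if E i j is Some x then x else false.

Definition algorithm1 (s : seq {set 'I_n}) : 'I_n -> 'I_n -> bool :=
  step4 (step3 (step2 (foldl step1 E_init s))).
End Alg.

From HB Require Import structures.
From mathcomp Require Import all_boot all_order all_algebra.
From mathcomp Require Import reals exp.
From mathcomp Require Import ring.
Import Order.TTheory GRing.Theory Num.Theory.
Local Open Scope ring_scope.
Set Implicit Arguments. Unset Strict Implicit. Unset Printing Implicit Defensive.

(* In the nested logit model the boost factor of an offered item i is
   BF(0,S) * Mult(N(i),S); the multiplier is 1 when the whole nest of i is
   offered and exceeds 1 otherwise (Assumption 1), and by Assumption 2 two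
   partially offered nests have different multipliers.  Hence step (1) writes
   only correct entries, and it writes (i,j) for S exactly when S resolves the
   pair: both offered and not both nests fully offered, or exactly one offered
   with its nest fully offered.  Because sigma is injective, two items always
   differ in some coordinate, and this forces: if an unresolved pair lies in one
   nest, every third item of that nest is resolved (as a 1) with both of them,
   so step (2) or step (3) sets the pair to 1; if it lies in two nests, the
   nest of i has two further items, one of which is resolved with i as a 1, so
   step (3) skips the pair and step (4) sets it to 0. *)

Section Partition.
Variables (n : nat) (P : {set {set 'I_n}}).
Hypothesis P_partition : partition P [set: 'I_n].

Lemma cover_partition : cover P = [set: 'I_n].
Proof. by case/and3P: P_partition => /eqP. Qed.

Lemma mem_pblock_self i : i \in pblock P i.
Proof. by rewrite mem_pblock cover_partition inE. Qed.

Lemma pblock_in i : pblock P i \in P.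
Proof. by rewrite pblock_mem // cover_partition inE. Qed.

Lemma eq_pblock_mem i j : (pblock P i == pblock P j) = (j \in pblock P i).
Proof.
by rewrite eq_pblock ?cover_partition ?inE //; case/and3P: P_partition.
Qed.

End Partition.

Section Assortment.
Variables (R : realType) (n : nat) (P : {set {set 'I_n}}).
Variables (BFi : 'I_n -> {set 'I_n} -> R) (BFo : {set 'I_n} -> R).
Hypothesis P_partition : partition P [set: 'I_n].
Local Notation N := (pblock P).

Definition reveals_nests (S : {set 'I_n}) : Prop :=
  (forall i, i \in S ->
     (BFi i S == BFo S) = (N i \subset S) /\ (BFo S < BFi i S) = ~~ (N i \subset S)) /\
  (forall i j, i \in S -> j \in S ->
     (BFi i S == BFi j S) = (N i == N j) || (N i \subset S) && (N j \subset S)).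

Definition resolves (S : {set 'I_n}) (i j : 'I_n) : bool :=
  if (i \in S) && (j \in S) then ~~ ((N i \subset S) && (N j \subset S))
  else (N i \subset S) || (N j \subset S).

Lemma resolvesC (S : {set 'I_n}) i j : resolves S i j = resolves S j i.
Proof. by rewrite /resolves andbC orbC [(N j \subset S) && _]andbC. Qed.

Lemma resolves_partial (S : {set 'I_n}) i j x :
  i \in S -> j \in S -> x \in N i -> x \notin S -> resolves S i j.
Proof.
by move=> iS jS xN xS; rewrite /resolves iS jS negb_and; apply/orP; left; apply/subsetPn; exists x.
Qed.

Lemma unresolved_leaving (S : {set 'I_n}) i j :
  i \in S -> j \notin S -> ~~ resolves S i j -> exists2 x, x \in N i & x \notin S.
Proof. by move=> iS jS; rewrite /resolves iS (negbTE jS) negb_or => /andP [/subsetPn]. Qed.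

Lemma step1_resolves E (S : {set 'I_n}) i j : reveals_nests S -> i != j ->
  step1 BFi BFo E S i j = if resolves S i j then Some (N i == N j) else E i j.
Proof.
move=> [BF_BFo BF_BF] ij.
have out_partial k : k \notin S -> (N k \subset S) = false.
  by move=> kS; apply: contraNF kS => /subsetP; apply; apply: mem_pblock_self.
have out_other k l : l \notin S -> N k \subset S -> (N k == N l) = false.
  move=> lS /subsetP NkS; apply/negbTE; rewrite eq_pblock_mem //.
  by apply: contra lS; apply: NkS.
rewrite /step1 /resolves ij andbT.
case: (boolP (i \in S)) => iS; case: (boolP (j \in S)) => jS /=.
- rewrite BF_BF // (BF_BFo i iS).2.
  by case: eqVneq => [->|_]; case: (N i \subset S); case: (N j \subset S).
- rewrite (BF_BFo i iS).1 (out_partial j jS) !andbT orbF.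
  by case: ifP => // NiS; rewrite out_other.
- rewrite (BF_BFo j jS).1 (out_partial i iS) !andbT.
  by case: ifP => // NjS; rewrite eq_sym out_other.
- by rewrite !out_partial.
Qed.

Lemma foldl_step1 (t : seq {set 'I_n}) E i j :
  (forall S, S \in t -> reveals_nests S) -> i != j ->
  foldl (step1 BFi BFo) E t i j =
  if has (fun S => resolves S i j) t then Some (N i == N j) else E i j.
Proof.
elim: t E => [|S t IH] E //= revt ij.
have revS : reveals_nests S by apply: revt; exact: mem_head.
rewrite IH ?step1_resolves // => [|T Tt]; last by apply: revt; rewrite inE Tt orbT.
by case: resolves; case: has.
Qed.

End Assortment.

Section Recovery.
Variables (n : nat) (Y : eqType) (c : 'I_n -> Y) (D : rel 'I_n) (E1 : mat n).
Hypothesis D_sym : symmetric D.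
Hypothesis E1_observed :
  forall i j, i != j -> E1 i j = if D i j then Some (c i == c j) else None.
Hypothesis D_same_class :
  forall i j k, j != k -> c i == c j -> c i == c k -> ~~ D i j -> D i k.
Hypothesis D_other_class :
  forall i j, i != j -> c i != c j -> ~~ D i j -> exists2 k, k != i & (c i == c k) && D i k.

Lemma step2_id (E : mat n) i j : E i j != None -> step2 E i j = E i j.
Proof. by rewrite /step2; case: (E i j). Qed.

Lemma step3_id (E : mat n) i j : E i j != None -> step3 E i j = E i j.
Proof. by rewrite /step3; case: (E i j). Qed.

Lemma E1_true i j : i != j -> E1 i j = Some true -> D i j /\ c i == c j.
Proof. by move=> ij; rewrite E1_observed //; case: (D i j) => // [[->]]. Qed.

Lemma step2_sound i j : i != j -> step2 E1 i j = Some true -> c i == c j.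
Proof.
move=> ij; rewrite /step2; case: ifP => [|_ /(E1_true ij) []//].
case/and3P=> _ _ /existsP [k /and4P [ki kj /eqP Eik /eqP Ejk]] _.
rewrite eq_sym in ki; rewrite eq_sym in kj.
have [_ /eqP ->] := E1_true ki Eik.
by have [_ /eqP ->] := E1_true kj Ejk.
Qed.

Lemma steps234_same_class i j : i != j -> c i == c j -> ~~ D i j ->
  step4 (step3 (step2 E1)) i j = true.
Proof.
move=> ij cij nDij.
have E1ij : E1 i j = None by rewrite E1_observed // (negbTE nDij).
have [E2ij | E2ij] : step2 E1 i j = Some true \/ step2 E1 i j = None.
  by rewrite /step2 E1ij; case: ifP; [left | right].
  by rewrite /step4 step3_id E2ij.
(* A third member k of the class would be resolved with both i and j, so step (2)
   would already have set (i,j). *)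
have not_mate k : k != i -> k != j -> c i != c k.
  move=> ki kj; apply/negP => cik.
  have [ik jk] : i != k /\ j != k by rewrite ![_ == k]eq_sym.
  have cji : c j == c i by rewrite eq_sym.
  have cjk : c j == c k by rewrite -(eqP cij).
  have nDji : ~~ D j i by rewrite D_sym.
  have Dik := D_same_class jk cij cik nDij.
  have Djk := D_same_class ik cji cjk nDji.
  move: E2ij; rewrite /step2 E1ij ij /= ifT //; apply/existsP; exists k.
  by rewrite ki kj !E1_observed 1?eq_sym // Dik Djk cik cjk.
rewrite /step4 /step3 E2ij ij /= ifT //; apply/forallP => k; apply/implyP => /andP [ki kj].
apply/andP; split; apply: contraNneq (not_mate k ki kj) => /step2_sound.
  by apply; rewrite eq_sym.
by rewrite (eqP cij); apply; rewrite eq_sym.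
Qed.

Lemma steps234_other_class i j : i != j -> c i != c j -> ~~ D i j ->
  step4 (step3 (step2 E1)) i j = false.
Proof.
move=> ij cij nDij.
have E2ij : step2 E1 i j = None.
  have := contraNneq (step2_sound ij) cij.
  by rewrite /step2 E1_observed // (negbTE nDij); case: ifP.
have [k ki /andP [cik Dik]] := D_other_class ij cij nDij.
have kj : k != j by apply: contraNneq cij => <-.
have ik : i != k by rewrite eq_sym.
have E1ik : E1 i k = Some true by rewrite E1_observed // Dik cik.
have E2ik : step2 E1 i k = Some true by rewrite step2_id E1ik.
rewrite /step4 /step3 E2ij ij /= ifF //; apply/negbTE/forallPn; exists k.
by rewrite ki kj E2ik.
Qed.

Lemma steps234_recover i j : i != j -> step4 (step3 (step2 E1)) i j = (c i == c j).
Proof.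
move=> ij; have [Dij | nDij] := boolP (D i j).
  by rewrite /step4 step3_id step2_id E1_observed ?Dij.
case: (boolP (c i == c j)) => cij.
  exact: steps234_same_class.
exact: steps234_other_class.
Qed.

End Recovery.

Section Design.
Variables (n b : nat) (sigma : 'I_n -> {ffun 'I_(up_log b n) -> 'I_b}).
Variable P : {set {set 'I_n}}.
Hypothesis sigma_inj : injective sigma.
Local Notation N := (pblock P).

Definition resolved (i j : 'I_n) : bool :=
  [exists l, exists d, resolves P (S_minus sigma l d) i j].

Lemma resolvedI l d i j : resolves P (S_minus sigma l d) i j -> resolved i j.
Proof. by move=> r; apply/existsP; exists l; apply/existsP; exists d. Qed.

Lemma resolvedC : symmetric resolved.
Proof. by move=> i j; apply: eq_existsb => l; apply: eq_existsb => d; apply: resolvesC. Qed.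

Lemma has_resolves_Sfam (s : seq {set 'I_n}) i j :
  (forall S, (S \in s) = (S \in Sfam sigma)) ->
  has (fun S => resolves P S i j) s = resolved i j.
Proof.
move=> s_Sfam; apply/hasP/existsP => [[S] | [l /existsP [d r]]].
  by rewrite s_Sfam => /imset2P [l d _ _ ->] r; exists l; apply/existsP; exists d.
by exists (S_minus sigma l d); rewrite // s_Sfam; apply/imset2P; exists l d.
Qed.

Lemma sigma_coord_neq i j : i != j -> exists l, sigma i l != sigma j l.
Proof.
move=> ij; apply/existsP; apply: contraNT ij; rewrite negb_exists => /forallP eq_ij.
by apply/eqP/sigma_inj/ffunP => l; apply/eqP; rewrite -[_ == _]negbK eq_ij.
Qed.

Lemma resolved_same_nest i j k : j != k -> j \in N i -> k \in N i ->
  ~~ resolved i j -> resolved i k.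
Proof.
move=> jk jN kN nij; have [l kjl] : exists l, sigma k l != sigma j l.
  by apply: sigma_coord_neq; rewrite eq_sym.
have ikl : sigma i l = sigma k l.
  apply/eqP; apply: contraNT nij => ikl; apply: (@resolvedI l (sigma k l)).
  by apply: (resolves_partial (x := k)); rewrite // !inE ?eqxx // eq_sym.
apply: (@resolvedI l (sigma j l)).
by apply: (resolves_partial (x := j)); rewrite // !inE ?eqxx // ikl.
Qed.

Lemma unresolved_hits i j l : ~~ resolved i j -> sigma i l != sigma j l ->
  exists2 x, x \in N i & sigma x l = sigma j l.
Proof.
move=> nij ijl.
have [|||x xN] := unresolved_leaving (P := P) (S := S_minus sigma l (sigma j l)) (i := i) (j := j).
- by rewrite inE.
- by rewrite inE eqxx.
- by apply: contra nij; apply: resolvedI.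
by rewrite inE negbK => /eqP; exists x.
Qed.

Lemma unresolved_agrees i j l x : ~~ resolved i j -> sigma i l = sigma j l ->
  x \in N i -> sigma x l = sigma j l.
Proof.
move=> nij ijl xN; apply/eqP; apply: contraNT nij => xjl.
apply: (@resolvedI l (sigma x l)); apply: (resolves_partial (x := x)) => //.
- by rewrite inE ijl eq_sym.
- by rewrite inE eq_sym.
- by rewrite inE eqxx.
Qed.

Lemma resolved_other_nest i j : i != j -> j \notin N i -> ~~ resolved i j ->
  exists2 k, k != i & (k \in N i) && resolved i k.
Proof.
move=> ij jN nij; have [l0 ijl0] := sigma_coord_neq ij.
have [a aN ajl0] := unresolved_hits nij ijl0.
have ai : a != i by apply: contraNneq ijl0 => <-; rewrite ajl0.
(* Were a the only other member of N i, it would agree with j in every coordinate. *)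
have [a' a'N /andP [a'i a'a]] : exists2 a', a' \in N i & (a' != i) && (a' != a).
  apply/exists_inP; apply: contraNT jN => /exists_inPn only_ia.
  suff <- : a = j by [].
  apply/sigma_inj/ffunP => l; have [ijl | ijl] := eqVneq (sigma i l) (sigma j l).
    exact: unresolved_agrees ijl aN.
  have [x xN xjl] := unresolved_hits nij ijl.
  move: (only_ia x xN); rewrite negb_and !negbK => /orP [/eqP xi | /eqP <- //].
  by move: ijl; rewrite -xi xjl eqxx.
have [ria | nria] := boolP (resolved i a); first by exists a; rewrite ?aN.
exists a' => //; rewrite a'N (resolved_same_nest _ aN a'N nria) //.
by rewrite eq_sym.
Qed.

End Design.

Lemma powR_divr (R : realType) (a b r : R) :
  0 <= a -> 0 <= b -> (a / b) `^ r = a `^ r / b `^ r.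
Proof.
move=> a0 b0; rewrite powRM ?invr_ge0 //; congr (_ * _).
by rewrite -powR_inv1 // -powRrM mulN1r powRN.
Qed.

Section NestedLogit.
Variables (R : realType) (n : nat) (P : {set {set 'I_n}}) (v : 'I_n -> R).
Variables (lam vN : {set 'I_n} -> R).
Hypothesis P_partition : partition P [set: 'I_n].
Hypothesis v_gt0 : forall i, 0 < v i.
Hypothesis lam_01 : forall N, N \in P -> 0 <= lam N <= 1.
Hypothesis vN_gt0 : forall N, N \in P -> lam N = 0 -> 0 < vN N.
Hypothesis lam_eq1 : forall N, N \in P -> (lam N = 1 <-> #|N| = 1%N).

Lemma wsum_gt0 (A : {set 'I_n}) x : x \in A -> 0 < wsum v A.
Proof.
move=> xA; rewrite /wsum (bigD1 x) //= ltr_wpDr //.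
by apply: sumr_ge0 => y _; apply: ltW.
Qed.

Lemma nestw_gt0 N S : N \in P -> N :&: S != set0 -> 0 < nestw v lam vN N S.
Proof.
move=> NP /set0Pn [x xNS]; rewrite /nestw.
case: ifP => [/eqP lam0 | _]; last exact/powR_gt0/(wsum_gt0 xNS).
by rewrite ifT ?vN_gt0 //; apply/set0Pn; exists x.
Qed.

Lemma denom_gt0 S : 0 < denom P v lam vN S.
Proof.
rewrite /denom ltr_wpDr //; apply: sumr_ge0 => N NP; rewrite /nestw.
by case: ifP => [/eqP lam0 | _]; [case: ifP => // _; apply/ltW/vN_gt0 | apply: powR_ge0].
Qed.

Lemma Mult_nestw N S : N \in P -> N :&: S != set0 ->
  Mult v lam N S =
  wsum v N / wsum v (N :&: S) * (nestw v lam vN N S / nestw v lam vN N [set: 'I_n]).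
Proof.
move=> NP NS0; have /set0Pn [x xNS] := NS0; have [xN _] := setIP xNS.
have wN := wsum_gt0 xN; have wNS := wsum_gt0 xNS.
have N0 : N != set0 by apply/set0Pn; exists x.
rewrite /Mult /nestw setIT NS0 N0; case: ifP => [/eqP lam0 | /negbT lam0].
  rewrite lam0 subr0 powRr1 ?divr_ge0 ?ltW // divff ?mulr1 //.
  by rewrite gt_eqF ?vN_gt0.
rewrite powRB; last by apply/implyP => _; rewrite gt_eqF ?divr_gt0.
rewrite powRr1 ?divr_ge0 ?ltW // powR_divr ?ltW //.
by field; rewrite !gt_eqF ?powR_gt0.
Qed.

Lemma BF_Mult (S : {set 'I_n}) i : i \in S ->
  BF P v lam vN i S = BF0 P v lam vN S * Mult v lam (pblock P i) S.
Proof.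
move=> iS; have NP := pblock_in P_partition i.
have iN := mem_pblock_self P_partition i.
have iNS : i \in pblock P i :&: S by rewrite inE iN.
have NS0 : pblock P i :&: S != set0 by apply/set0Pn; exists i.
have NT0 : pblock P i :&: [set: 'I_n] != set0 by rewrite setIT; apply/set0Pn; exists i.
rewrite Mult_nestw // /BF /BF0 /phi /phi0 /nest setIT.
have := nestw_gt0 NP NT0; have := wsum_gt0 iN; have := wsum_gt0 iNS.
have := denom_gt0 S; have := denom_gt0 [set: 'I_n]; have := v_gt0 i.
by move=> *; field; rewrite !gt_eqF.
Qed.

Lemma Mult_eq1 (N S : {set 'I_n}) x : x \in N -> N \subset S -> Mult v lam N S = 1.
Proof.
by move=> xN NS; rewrite /Mult (setIidPl NS) divff ?powR1 // gt_eqF // (wsum_gt0 xN).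
Qed.

Lemma lam_lt1 N : N \in P -> (1 < #|N|)%N -> lam N < 1.
Proof.
move=> NP N_gt1; have /andP [_ lam_le1] := lam_01 NP.
rewrite lt_neqAle lam_le1 andbT; apply/eqP => /(lam_eq1 NP) N1.
by rewrite N1 in N_gt1.
Qed.

Lemma Mult_gt1 (N S : {set 'I_n}) : N \in P -> N :&: S != set0 -> ~~ (N \subset S) ->
  1 < Mult v lam N S.
Proof.
move=> NP /set0Pn [x xNS] /subsetPn [y yN yS]; have [xN _] := setIP xNS.
have wNS := wsum_gt0 xNS.
have ratio_gt1 : 1 < wsum v N / wsum v (N :&: S).
  have -> : wsum v N = wsum v (N :&: S) + wsum v (N :\: S) by rewrite /wsum (big_setID S).
  rewrite ltr_pdivlMr // mul1r ltrDl.
  by apply: (@wsum_gt0 _ y); rewrite inE yN yS.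
have exp_gt0 : 0 < 1 - lam N.
  rewrite subr_gt0 lam_lt1 //; apply/card_gt1P; exists x, y; split => //.
  by apply: contraNneq yS => <-; have [] := setIP xNS.
have := gt0_ltr_powR exp_gt0 _ _ ratio_gt1; rewrite powR1; apply.
  by rewrite nnegrE.
by rewrite nnegrE divr_ge0 // ltW // (wsum_gt0 xN).
Qed.

Lemma BF_reveals_nests (S : {set 'I_n}) :
  (forall N N', N \in P -> N' \in P -> N != N' ->
     N :&: S != set0 -> N :&: S != N -> N' :&: S != set0 -> N' :&: S != N' ->
     Mult v lam N S != Mult v lam N' S) ->
  reveals_nests P (BF P v lam vN) (BF0 P v lam vN) S.
Proof.
move=> Mult_inj; have BF0_gt0 : 0 < BF0 P v lam vN S.
  by rewrite /BF0 /phi0 !divr_gt0 ?denom_gt0.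
have NP := pblock_in P_partition; have self := mem_pblock_self P_partition.
have NS0 k : k \in S -> pblock P k :&: S != set0.
  by move=> kS; apply/set0Pn; exists k; rewrite inE self.
have NSN k : ~~ (pblock P k \subset S) -> pblock P k :&: S != pblock P k.
  by apply: contra => /eqP/setIidPl.
split => [i iS | i j iS jS]; rewrite !BF_Mult //.
  have [NiS | NiS] := boolP (pblock P i \subset S).
    by rewrite (Mult_eq1 (self i)) // mulr1 eqxx ltxx.
  by rewrite gt_eqF ltr_pMr // Mult_gt1 ?NS0.
rewrite (inj_eq (mulfI (lt0r_neq0 BF0_gt0))).
have [-> | Nij] := eqVneq (pblock P i) (pblock P j); first by rewrite eqxx.
have [NiS | NiS] := boolP (pblock P i \subset S);
  have [NjS | NjS] := boolP (pblock P j \subset S).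
- by rewrite (Mult_eq1 (self i)) // (Mult_eq1 (self j)) // eqxx.
- by rewrite (Mult_eq1 (self i)) // lt_eqF // Mult_gt1 ?NS0.
- by rewrite (Mult_eq1 (self j)) // gt_eqF // Mult_gt1 ?NS0.
- by apply/negbTE/Mult_inj; rewrite ?NP ?NS0 ?NSN.
Qed.

End NestedLogit.

Theorem theorem4p5 (R : realType) (n b : nat)
  (sigma : 'I_n -> {ffun 'I_(up_log b n) -> 'I_b})
  (P : {set {set 'I_n}}) (v : 'I_n -> R) (lam vN : {set 'I_n} -> R)
  (s : seq {set 'I_n}) :
  (2 <= n)%N -> (2 <= b)%N -> injective sigma ->
  partition P [set: 'I_n] ->
  (forall i, 0 < v i) ->
  (forall N, N \in P -> 0 <= lam N <= 1) ->
  (forall N, N \in P -> lam N = 0 -> 0 < vN N) ->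
  (* Assumption 1 *)
  (forall N, N \in P -> (lam N = 1 <-> #|N| = 1%N)) ->
  (* Assumption 2 *)
  (forall S N N', S \in Sfam sigma -> N \in P -> N' \in P -> N != N' ->
     N :&: S != set0 -> N :&: S != N -> N' :&: S != set0 -> N' :&: S != N' ->
     Mult v lam N S != Mult v lam N' S) ->
  (* s enumerates the family Sfam, in an arbitrary order *)
  uniq s -> (forall S, (S \in s) = (S \in Sfam sigma)) ->
  forall i j : 'I_n, i != j ->
    algorithm1 (BF P v lam vN) (BF0 P v lam vN) s i j = (pblock P i == pblock P j).
Proof.
move=> _ _ sigma_inj P_part v_gt0 lam_01 vN_gt0 lam_eq1 Mult_inj _ s_Sfam i j ij.
have reveals S : S \in s -> reveals_nests P (BF P v lam vN) (BF0 P v lam vN) S.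
  rewrite s_Sfam => SF; apply: BF_reveals_nests => // N N'; exact: Mult_inj.
apply: (steps234_recover (D := resolved sigma P)) ij => [||x y z yz|x y xy].
- exact: resolvedC.
- by move=> x y xy; rewrite (foldl_step1 P_part) // (has_resolves_Sfam _ _ _ s_Sfam).
- rewrite !eq_pblock_mem //; exact: resolved_same_nest.
- rewrite eq_pblock_mem // => yN nxy.
  have [k kx /andP [kN xk]] := resolved_other_nest sigma_inj xy yN nxy.
  by exists k; rewrite // eq_pblock_mem // kN.
Qed.
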